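(* Let $m_2>m_1\ge1$ be integers and consider tilings with $(\frac12,\frac12;m_1)$- and $(\frac12,\frac12;m_2)$-combs. The mixed metatiles occur in pairs, whereby one element of the pair is generated from the other by interchanging the contents of the two slots in each cell; that is, this interchange operation maps every mixed metatile of length $l$ to a mixed metatile of length $l$ that is different from it.
   Context: An $n$-board is the strip $[0,n]\times[0,1]$ divided into unit cells $[k-1,k]\times[0,1]$, $k=1,\dots,n$; each cell consists of a left slot $[k-1,k-\frac12]\times[0,1]$ and a right slot $[k-\frac12,k]\times[0,1]$. A $(w,g;t)$-comb is a tile consisting of a row of $t$ rectangles (teeth) of size $w\times1$, consecutive teeth separated by a gap of width $g$; gaps are not part of the tile and may be occupied by other tiles. A tiling is a placement of translated (unrotated) combs whose teeth cover the board exactly without overlap. Given a tiling of an $n$-board, an integer $x$ with $0<x<n$ is a cut point if every comb has all of its teeth in $[0,x]$ or all in $[x,n]$. A metatile of length $l$ is a tiling of an $l$-board with no cut point (every tiling splits uniquely at its cut points into a sequence of metatiles). A metatile is mixed if it contains combs of more than one type. *)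

From mathcomp Require Import all_boot.
Set Implicit Arguments. Unset Strict Implicit. Unset Printing Implicit Defensive.

(* Slots of an n-board are indexed by k < 2n (half-units): slot k is
   [k/2, (k+1)/2] x [0,1]; slot 2j is the left slot and slot 2j+1 the right
   slot of cell j+1.  A (1/2,1/2;t)-comb is a pair (s, t): its teeth are the
   width-1/2 rectangles occupying slots s, s+2, ..., s+2(t-1) (tooth width 1/2,
   gap 1/2, so consecutive teeth start one unit apart). *)
Definition comb := (nat * nat)%type.

Definition comb_start (c : comb) : nat := c.1.
Definition comb_teeth (c : comb) : nat := c.2.

Definition comb_slots (c : comb) : seq nat :=
  [seq comb_start c + 2 * i | i <- iota 0 (comb_teeth c)].

Definition is_tiling (m1 m2 n : nat) (T : seq comb) : Prop :=
  [/\ forall c, c \in T -> comb_teeth c = m1 \/ comb_teeth c = m2,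
      forall c k, c \in T -> k \in comb_slots c -> k < 2 * n
    & forall k, k < 2 * n -> count (fun c => k \in comb_slots c) T = 1].

Definition is_cut_point (n : nat) (T : seq comb) (x : nat) : Prop :=
  0 < x < n /\
  forall c, c \in T ->
    (forall k, k \in comb_slots c -> k < 2 * x) \/
    (forall k, k \in comb_slots c -> 2 * x <= k).

Definition is_metatile (m1 m2 l : nat) (T : seq comb) : Prop :=
  is_tiling m1 m2 l T /\ forall x, ~ is_cut_point l T x.

Definition is_mixed (T : seq comb) : Prop :=
  exists c1 c2, [/\ c1 \in T, c2 \in T & comb_teeth c1 <> comb_teeth c2].

Definition swap_slot (k : nat) : nat := if odd k then k.-1 else k.+1.
Definition swap_comb (c : comb) : comb := (swap_slot c.1, c.2).
Definition swap_tiling (T : seq comb) : seq comb := map swap_comb T.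

From mathcomp Require Import all_boot zify.

Set Implicit Arguments. Unset Strict Implicit. Unset Printing Implicit Defensive.

(* Swapping the two slots of every cell is an involution that keeps each slot
   in its cell, so it maps tilings to tilings, cut points to cut points and
   preserves the number of teeth of every comb.  If a tiling is invariant,
   then with a comb of t teeth it also contains its partner in the other
   slots; the two combs cover exactly the block of t cells they span.  A comb
   advances by one cell per tooth, so no other comb can jump over a fully
   covered block: the two ends of the block are cut points.  In a metatile the
   block is therefore the whole board, every comb has t teeth, and the
   metatile is not mixed. *)

Lemma swap_slotK : involutive swap_slot.
Proof. by move=> k; rewrite /swap_slot; case: ifP => /=; case: ifP; lia. Qed.

Lemma swap_slot_lt2 k x : (swap_slot k < 2 * x) = (k < 2 * x).
Proof. by rewrite /swap_slot; case: ifP => ?; apply/idP/idP; lia. Qed.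

Lemma swap_slot_ge2 k x : (2 * x <= swap_slot k) = (2 * x <= k).
Proof. by rewrite leqNgt swap_slot_lt2 -leqNgt. Qed.

Lemma swap_slotD2 s i : swap_slot (s + 2 * i) = swap_slot s + 2 * i.
Proof. by rewrite /swap_slot oddD oddM andFb addbF; case: ifP; lia. Qed.

Lemma swap_combK : involutive swap_comb.
Proof. by case=> s t; rewrite /swap_comb swap_slotK. Qed.

Lemma swap_tilingK : involutive swap_tiling.
Proof. exact: mapK swap_combK. Qed.

Lemma comb_slots_swap c : comb_slots (swap_comb c) = map swap_slot (comb_slots c).
Proof. by rewrite /comb_slots -map_comp; apply: eq_map => i /=; rewrite swap_slotD2. Qed.

Lemma mem_comb_slots_swap c k :
  (k \in comb_slots (swap_comb c)) = (swap_slot k \in comb_slots c).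
Proof. by rewrite comb_slots_swap -{1}(swap_slotK k) (mem_map (can_inj swap_slotK)). Qed.

Lemma mem_swap_tiling T c : (c \in swap_tiling T) = (swap_comb c \in T).
Proof. by rewrite -{1}(swap_combK c) (mem_map (can_inj swap_combK)). Qed.

Lemma mem_comb_slotsP s t k :
  reflect (exists2 i, i < t & k = s + 2 * i) (k \in comb_slots (s, t)).
Proof.
apply: (iffP mapP) => [[i]|[i ti ->]]; first by rewrite mem_iota => ? ->; exists i.
by exists i; rewrite // mem_iota.
Qed.

Lemma comb_start_slot s t : 0 < t -> s \in comb_slots (s, t).
Proof. by move=> t_gt0; apply/mem_comb_slotsP; exists 0; rewrite ?addn0. Qed.

Lemma swap_tiling_is_tiling m1 m2 n T :
  is_tiling m1 m2 n T -> is_tiling m1 m2 n (swap_tiling T).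
Proof.
case=> teethT boundT coverT; split.
- by move=> c; rewrite mem_swap_tiling => /teethT.
- move=> c k; rewrite mem_swap_tiling => cT kc; rewrite -swap_slot_lt2.
  by apply: boundT cT _; rewrite -mem_comb_slots_swap swap_combK.
- move=> k kn; rewrite count_map -(coverT (swap_slot k)) ?swap_slot_lt2 //.
  by apply: eq_count => c; rewrite /= mem_comb_slots_swap.
Qed.

Lemma swap_tiling_cut_point n T x :
  is_cut_point n T x -> is_cut_point n (swap_tiling T) x.
Proof.
case=> xn cutT; split=> // _ /mapP[c cT ->].
have [below|above] := cutT c cT; [left|right] => k;
  rewrite comb_slots_swap => /mapP[j jc ->].
- by rewrite swap_slot_lt2; apply: below.
- by rewrite swap_slot_ge2; apply: above.
Qed.

Lemma swap_tiling_is_metatile m1 m2 l T :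
  is_metatile m1 m2 l T -> is_metatile m1 m2 l (swap_tiling T).
Proof.
case=> tileT nocutT; split; first exact: swap_tiling_is_tiling.
by move=> x /swap_tiling_cut_point; rewrite swap_tilingK; apply: nocutT.
Qed.

Lemma swap_tiling_is_mixed T : is_mixed T -> is_mixed (swap_tiling T).
Proof.
case=> c1 [c2 [c1T c2T ne]].
by exists (swap_comb c1), (swap_comb c2); split; try exact: map_f.
Qed.

Lemma tiling_slot_owner_uniq m1 m2 n T c d k :
  is_tiling m1 m2 n T -> c \in T -> d \in T ->
  k \in comb_slots c -> k \in comb_slots d -> c = d.
Proof.
case=> _ boundT coverT cT dT kc kd.
have := coverT k (boundT c k cT kc); rewrite -size_filter.
have : c \in [seq e <- T | k \in comb_slots e] by rewrite mem_filter kc.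
have : d \in [seq e <- T | k \in comb_slots e] by rewrite mem_filter kd.
by case: filter => [|e [|]] //; rewrite !inE => /eqP-> /eqP->.
Qed.

(* Consecutive teeth are two slots apart, whence the hypothesis [a.+1 < b]. *)
Lemma comb_slots_avoid_interval c a b : a.+1 < b ->
  (forall k, k \in comb_slots c -> a <= k < b -> False) ->
  (forall k, k \in comb_slots c -> k < a) \/ (forall k, k \in comb_slots c -> b <= k).
Proof.
case: c => s t ab avoid.
have slot i : i < t -> s + 2 * i \in comb_slots (s, t).
  by move=> it; apply/mem_comb_slotsP; exists i.
have [s_lt_a|a_le_s] := ltnP s a; [left|right] => _ /mem_comb_slotsP[i it ->].
- elim: i it => [|i IH] it; first by rewrite addn0.
  have := IH (ltnW it); case: (ltnP (s + 2 * i.+1) a) => // ai ia.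
  by case: (avoid _ (slot _ it)); lia.
- case: (ltnP s b) => [sb|]; last lia.
  by case: (avoid _ (slot 0 (leq_ltn_trans (leq0n i) it))); rewrite addn0 ?a_le_s.
Qed.

Definition domino (q t : nat) : seq comb := [:: (2 * q, t); (2 * q + 1, t)].

Lemma domino_slots q t c k : c \in domino q t ->
  k \in comb_slots c -> 2 * q <= k < 2 * q + 2 * t.
Proof. by rewrite !inE => /orP[]/eqP-> /mem_comb_slotsP[i it ->]; lia. Qed.

Lemma swap_closed_domino (T : seq comb) (c : comb) : c \in T -> swap_comb c \in T ->
  {subset domino c.1./2 c.2 <= T}.
Proof.
case: c => s t; rewrite /swap_comb /swap_slot /=; have := odd_double_half s.
case: (odd s) => /= s_eq cT sT d; rewrite !inE => /orP[]/eqP->.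
- by have -> : 2 * s./2 = s.-1 by lia.
- by have -> : 2 * s./2 + 1 = s by lia.
- by have -> : 2 * s./2 = s by lia.
- by have -> : 2 * s./2 + 1 = s.+1 by lia.
Qed.

Section Domino.

Variables (m1 m2 l : nat) (T : seq comb) (q t : nat).
Hypotheses (tileT : is_tiling m1 m2 l T) (t_gt0 : 0 < t).
Hypothesis dominoT : {subset domino q t <= T}.

Lemma domino_block_side c : c \in T -> c \notin domino q t ->
  (forall k, k \in comb_slots c -> k < 2 * q) \/
  (forall k, k \in comb_slots c -> 2 * q + 2 * t <= k).
Proof.
move=> cT c_out; apply: comb_slots_avoid_interval; first lia.
move=> k kc kq; have [d d_in kd] : exists2 d, d \in domino q t & k \in comb_slots d.
  have := odd_double_half k; case: (odd k) => ?; [exists (2 * q + 1, t) | exists (2 * q, t)];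
    rewrite ?inE ?eqxx ?orbT //; apply/mem_comb_slotsP; exists (k./2 - q); lia.
by move: c_out; rewrite (tiling_slot_owner_uniq tileT cT (dominoT d_in) kc kd) d_in.
Qed.

Lemma domino_cut_point x : x \in [:: q; q + t] -> 0 < x < l -> is_cut_point l T x.
Proof.
move=> x_end xl; split=> // c cT.
have [c_in|c_out] := boolP (c \in domino q t).
  by move: x_end; rewrite !inE => /orP[]/eqP->; [right|left] => k /(domino_slots c_in); lia.
have x_bounds : q <= x <= q + t by move: x_end; rewrite !inE => /orP[]/eqP->; lia.
by case: (domino_block_side cT c_out) => side; [left|right] => k /side; lia.
Qed.

Lemma metatile_domino_teeth c : (forall x, ~ is_cut_point l T x) ->
  c \in T -> 0 < comb_teeth c -> comb_teeth c = t.
Proof.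
case: c => s u nocut cT u_gt0.
have [|c_out] := boolP ((s, u) \in domino q t); first by rewrite !inE => /orP[]/eqP[_ ->].
case: tileT => _ boundT _.
have leftT : (2 * q, t) \in T by apply: dominoT; rewrite inE eqxx.
have q_lt_l : q < l by have := boundT _ _ leftT (comb_start_slot _ t_gt0); lia.
have s_lt_l : s < 2 * l := boundT _ _ cT (comb_start_slot _ u_gt0).
exfalso; case: (domino_block_side cT c_out) => /(_ s (comb_start_slot _ u_gt0)) side.
- by apply: (nocut q); apply: domino_cut_point; rewrite ?inE ?eqxx //; lia.
- by apply: (nocut (q + t)); apply: domino_cut_point; rewrite ?inE ?eqxx ?orbT //; lia.
Qed.

End Domino.

Lemma metatile_not_swap_invariant m1 m2 l T : 0 < m1 -> 0 < m2 ->
  is_metatile m1 m2 l T -> is_mixed T -> ~ swap_tiling T =i T.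
Proof.
move=> m1_gt0 m2_gt0 [tileT nocut] [c1 [c2 [c1T c2T ne]]] inv.
have teeth_gt0 c : c \in T -> 0 < comb_teeth c.
  by case: tileT => teethT _ _ /teethT[]->.
have sc1T : swap_comb c1 \in T by rewrite -inv mem_swap_tiling swap_combK.
have teeth_eq :=
  metatile_domino_teeth tileT (teeth_gt0 _ c1T) (swap_closed_domino c1T sc1T) nocut.
by apply: ne; rewrite (teeth_eq c2) ?teeth_gt0.
Qed.

Theorem lemma1 (m1 m2 : nat) (h1 : 1 <= m1) (h12 : m1 < m2)
    (l : nat) (T : seq comb) :
  is_metatile m1 m2 l T -> is_mixed T ->
  [/\ is_metatile m1 m2 l (swap_tiling T),
      is_mixed (swap_tiling T)
    & ~ (swap_tiling T =i T)].
Proof.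
move=> metaT mixedT; split.
- exact: swap_tiling_is_metatile.
- exact: swap_tiling_is_mixed.
- exact: metatile_not_swap_invariant (leq_trans h1 (ltnW h12)) metaT mixedT.
Qed.
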